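(* Let $\widehat D=(Q,\widehat\Sigma,q_0,\delta,F)$ be as in the context. For all $q,q'\in Q$ and $\sigma\in\Sigma$: if $\delta(q,\sigma^0)=q'$, then there exist $\mathit{act}\in\Sigma_{\mathsf{Act}}$ and $q_f\in Q$ with $\mathit{act}[0]=0$, $\delta(q,\mathit{act})=q_f$ and $\mathit{act}|_\sigma\in\{0,+1\}$; and if $\delta(q,\sigma^1)=q'$, then there exist $\mathit{act}\in\Sigma_{\mathsf{Act}}$ and $q_f\in Q$ with $\mathit{act}[0]=1$, $\delta(q,\mathit{act})=q_f$ and $\mathit{act}|_\sigma\in\{-1,0,+1\}$.
   Context: Let $\Sigma=\{\sigma_1,\dots,\sigma_k\}$ be a finite alphabet. A sample set is a pair of finite sets of words $\mathcal S^+,\mathcal S^-\subseteq\Sigma^*$ with $\mathcal S^+\cap\mathcal S^-=\emptyset$; write $\mathcal S=\mathcal S^+\cup\mathcal S^-$ and $\mathrm{pref}(\mathcal S)$ for the set of all prefixes (including $\varepsilon$ and the words themselves) of words of $\mathcal S$. We are given $\mathsf{ce}:\mathrm{pref}(\mathcal S)\to\mathbb N$ with $\mathsf{ce}(\varepsilon)=0$ and $\mathsf{ce}(w\sigma)-\mathsf{ce}(w)\in\{-1,0,+1\}$ whenever $w\sigma\in\mathrm{pref}(\mathcal S)$, $\sigma\in\Sigma$. For $d\in\mathbb N$, $\mathrm{sgn}(d)=0$ if $d=0$ and $1$ otherwise. For $w\in\mathrm{pref}(\mathcal S)$ define $\mathsf{Act}(w)\in\{0,1\}\times\{0,+1,-1,\bot\}^k$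 by $\mathsf{Act}(w)[0]=\mathrm{sgn}(\mathsf{ce}(w))$ and, for $i\in[1,k]$, $\mathsf{Act}(w)[i]=\mathsf{ce}(w\sigma_i)-\mathsf{ce}(w)$ if $w\sigma_i\in\mathrm{pref}(\mathcal S)$, and $\mathsf{Act}(w)[i]=\bot$ otherwise. For a tuple $\mathit{act}$ of this shape, $\mathit{act}|_{\sigma_i}$ denotes $\mathit{act}[i]$. Two such tuples $x,y$ are similar, $x\sim y$, if either $x[0]\neq y[0]$, or for all $i\in[1,k]$: $x[i]=\bot$ or $y[i]=\bot$ or $x[i]=y[i]$; otherwise $x\not\sim y$. Let $\widetilde\Sigma=\{\sigma^0,\sigma^1:\sigma\in\Sigma\}$ (fresh letters). For $w\in\mathrm{pref}(\mathcal S)$, $\mathsf{Enc}(\varepsilon)=\varepsilon$ and $\mathsf{Enc}(w)$ is the word over $\widetilde\Sigma$ of the same length with $\mathsf{Enc}(w)[0]=w[0]^0$ and $\mathsf{Enc}(w)[i]=w[i]^{\mathrm{sgn}(\mathsf{ce}(w[0\cdots i-1]))}$ for $i>0$ (positions indexed from $0$). Let $\Sigma_{\mathsf{Act}}=\{\mathsf{Act}(w):w\in\mathrm{pref}(\mathcal S)\}$, viewed as a set of fresh letters, and $\widehat\Sigma=\widetilde\Sigma\cup\Sigma_{\mathsf{Act}}$. The enriched sample over $\widehat\Sigma$ is: $\widehat{\mathcal S}^+=\{\mathsf{Enc}(w):w\in\mathcal S^+\}\cup\{\mathsf{Enc}(w)\cdot\mathsf{Act}(w):w\in\mathrm{pref}(\mathcal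 S)\}$ and $\widehat{\mathcal S}^-=\{\mathsf{Enc}(w):w\in\mathcal S^-\}\cup\{\mathsf{Enc}(w)\cdot\mathit{op}:w\in\mathrm{pref}(\mathcal S),\ \mathit{op}\in\Sigma_{\mathsf{Act}},\ \mathit{op}\not\sim\mathsf{Act}(w)\}$. $\widehat D=(Q,\widehat\Sigma,q_0,\delta,F)$ is a deterministic finite automaton with possibly partial transition function $\delta$ (a word is accepted iff its run exists and ends in $F$) such that: (i) $\widehat D$ accepts every word of $\widehat{\mathcal S}^+$ and rejects every word of $\widehat{\mathcal S}^-$; (ii) every transition comes from a prefix of a positive sample: whenever $\delta(q,x)=q'$ with $x\in\widehat\Sigma$, there is a word $u$ with $ux\in\mathrm{pref}(\widehat{\mathcal S}^+)$ and $\delta(q_0,u)=q$. (These properties hold e.g. for the output of the RPNI algorithm.) *)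

From mathcomp Require Import all_boot all_order all_algebra.
Set Implicit Arguments. Unset Strict Implicit. Unset Printing Implicit Defensive.

(* Alphabet Sigma = {sigma_1..sigma_k} is represented by 'I_k
   (sigma_{i+1} is the ordinal i). *)
Definition word (k : nat) := seq 'I_k.

(* An Act-tuple: component 0 is a bit (false = 0, true = 1), components
   1..k are elements of {0,+1,-1,bot}, represented as option int
   (None = bot). *)
Definition act (k : nat) := (bool * {ffun 'I_k -> option int})%type.

(* Letters of widehat Sigma: inl (sigma, b) is sigma^b (b = false is 0,
   b = true is 1); inr a is the Act-letter a. *)
Definition letter (k : nat) := ('I_k * bool + act k)%type.

Definition prefS (k : nat) (S : seq (word k)) (v : word k) : bool :=
  has (fun w => prefix v w) S.

Definition Act (k : nat) (S : seq (word k)) (ce : word k -> nat) (w : word k)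
  : act k :=
  (ce w != 0%N,
   [ffun i => if prefS S (rcons w i)
              then Some ((ce (rcons w i))%:Z - (ce w)%:Z)%R else None]).

Definition similar (k : nat) (x y : act k) : bool :=
  (x.1 != y.1) ||
  [forall i, (x.2 i == None) || (y.2 i == None) || (x.2 i == y.2 i)].

Definition Enc (k : nat) (ce : word k -> nat) (w : word k) : seq (letter k) :=
  map (fun p : nat * 'I_k =>
         inl (p.2, if p.1 == 0%N then false else ce (take p.1 w) != 0%N))
      (zip (iota 0 (size w)) w).

Definition inSigmaAct (k : nat) (S : seq (word k)) (ce : word k -> nat)
  (a : act k) : Prop :=
  exists w, prefS S w /\ a = Act S ce w.

Definition posHat (k : nat) (Sp Sm : seq (word k)) (ce : word k -> nat)
  (u : seq (letter k)) : Prop :=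
  (exists w, w \in Sp /\ u = Enc ce w) \/
  (exists w, prefS (Sp ++ Sm) w /\ u = rcons (Enc ce w) (inr (Act (Sp ++ Sm) ce w))).

Definition negHat (k : nat) (Sp Sm : seq (word k)) (ce : word k -> nat)
  (u : seq (letter k)) : Prop :=
  (exists w, w \in Sm /\ u = Enc ce w) \/
  (exists w op, prefS (Sp ++ Sm) w /\ inSigmaAct (Sp ++ Sm) ce op /\
     ~~ similar op (Act (Sp ++ Sm) ce w) /\ u = rcons (Enc ce w) (inr op)).

Definition run (k : nat) (Q : Type) (delta : Q -> letter k -> option Q)
  (q : Q) (u : seq (letter k)) : option Q :=
  foldl (fun o x => obind (fun p => delta p x) o) (Some q) u.

Definition accepts (k : nat) (Q : Type) (delta : Q -> letter k -> option Q)
  (q0 : Q) (F : pred Q) (u : seq (letter k)) : bool :=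
  if run delta q0 u is Some q then F q else false.

(* A transition on [sigma^b] out of [q] is used by some positive word, so
   [q] is reached by a prefix [Enc w] of a positive encoding and the next
   letter of that encoding is [sigma^b]; hence [w sigma] is a sample prefix
   and [b = sgn (ce w)].  The positive word [Enc w . Act w] must be accepted
   by the deterministic automaton, so [q] has an [Act w]-transition, and
   [Act w] has first component [b] and [sigma]-entry [ce (w sigma) - ce w],
   which is [-1] only if [ce w > 0]. *)
From mathcomp Require Import all_boot all_order all_algebra.

Set Implicit Arguments.
Unset Strict Implicit.
Unset Printing Implicit Defensive.

Lemma take_zip (A B : Type) (a : seq A) (b : seq B) n :
  take n (zip a b) = zip (take n a) (take n b).
Proof. by elim: a b n => [|x a IHa] [|y b] [|n] //=; rewrite IHa. Qed.

Lemma prefix_rcons_neq (T : eqType) (u e : seq T) x y :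
  x != y -> prefix (rcons u x) (rcons e y) -> prefix (rcons u x) e.
Proof.
move=> neq_xy; rewrite !prefixE size_rcons -cats1.
case: (ltnP (size u) (size e)) => [lt_ue|le_eu]; first by rewrite takel_cat.
rewrite take_oversize ?size_cat /= ?addn1 // cats1 => /eqP /rcons_inj [_ eq_xy].
by rewrite eq_xy eqxx in neq_xy.
Qed.

Lemma prefS_prefix k (S : seq (word k)) v w :
  prefix v w -> prefS S w -> prefS S v.
Proof.
by move=> pre_vw /hasP[z zS pre_wz]; apply/hasP; exists z; last exact: prefix_trans pre_wz.
Qed.

Lemma run_rcons k (Q : Type) (delta : Q -> letter k -> option Q) q u x :
  run delta q (rcons u x) = obind (delta^~ x) (run delta q u).
Proof. by rewrite /run foldl_rcons. Qed.

Lemma accepts_rcons_step k (Q : Type) (delta : Q -> letter k -> option Q)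
    q0 F u x q :
  accepts delta q0 F (rcons u x) -> run delta q0 u = Some q ->
  exists q', delta q x = Some q'.
Proof.
rewrite /accepts run_rcons => + run_u; rewrite run_u /=.
by case: (delta q x) => [q'|] // _; exists q'.
Qed.

Section Encoding.

Variables (k : nat) (ce : word k -> nat).
Hypothesis ce_nil : ce [::] = 0%N.

Lemma Enc_take n w : take n (Enc ce w) = Enc ce (take n w).
Proof.
rewrite /Enc -map_take take_zip take_iota size_take_min.
apply/eq_in_map => -[i c] /(map_f fst) /=.
rewrite -/(unzip1 _) unzip1_zip ?size_iota ?size_take_min // mem_iota.
by rewrite leq_min => /andP[_ /andP[/ltnW le_in _]]; rewrite take_takel.
Qed.

(* The bit of a letter is [sgn (ce w)] of the preceding prefix [w]; the
   definition special-cases position 0, which [ce [::] = 0] makes uniform. *)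
Lemma Enc_rcons w s : Enc ce (rcons w s) = rcons (Enc ce w) (inl (s, ce w != 0%N)).
Proof.
rewrite /Enc size_rcons -addn1 iotaD add0n cats1 zip_rcons ?size_iota //.
have take_w : take (size w) (rcons w s) = w by rewrite -cats1 take_size_cat.
rewrite map_rcons /= take_w; congr (rcons _ (inl (s, _))).
  apply/eq_in_map => -[i c] /(map_f fst) /=.
  rewrite -/(unzip1 _) unzip1_zip ?size_iota // mem_iota add0n => /andP[_ lt_iw].
  by rewrite -cats1 takel_cat // ltnW.
by case: eqP => [/size0nil ->|]; rewrite ?ce_nil.
Qed.

Lemma prefix_Enc_rcons u s b w :
  prefix (rcons u (inl (s, b))) (Enc ce w) ->
  exists w0, prefix (rcons w0 s) w /\ u = Enc ce w0 /\ b = (ce w0 != 0%N).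
Proof.
rewrite prefixE Enc_take => /eqP.
have pre_w := prefix_take w (size (rcons u (inl (s, b)))).
case/lastP: (take _ w) pre_w => [|w0 s0] pre_w; first by case: (u).
by rewrite Enc_rcons => /rcons_inj [<- <- <-]; exists w0.
Qed.

End Encoding.

Lemma Act_bit k (S : seq (word k)) ce w : (Act S ce w).1 = (ce w != 0%N).
Proof. by []. Qed.

Lemma Act_entry k (S : seq (word k)) ce w s :
  prefS S (rcons w s) -> (Act S ce w).2 s = Some ((ce (rcons w s))%:Z - (ce w)%:Z)%R.
Proof. by move=> Sws; rewrite ffunE Sws. Qed.

Section Enriched.

Variables (k : nat) (Sp Sm : seq (word k)) (ce : word k -> nat).
Hypothesis ce_nil : ce [::] = 0%N.
Local Notation S := (Sp ++ Sm).

Lemma posHat_prefix_Enc u s b v :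
  posHat Sp Sm ce v -> prefix (rcons u (inl (s, b))) v ->
  exists w, [/\ prefS S (rcons w s), u = Enc ce w & b = (ce w != 0%N)].
Proof.
have prefS_S w : prefS S w ->  prefix (rcons u (inl (s, b))) (Enc ce w) ->
    exists w0, [/\ prefS S (rcons w0 s), u = Enc ce w0 & b = (ce w0 != 0%N)].
  move=> Sw /(prefix_Enc_rcons ce_nil) [w0 [pre_w0 [-> ->]]].
  by exists w0; split=> //; exact: prefS_prefix pre_w0 Sw.
case=> [[w [wSp ->]] | [w [Sw ->]]].
  by apply: prefS_S; apply/hasP; exists w; rewrite ?mem_cat ?wSp ?prefix_refl.
by move=> pre_v; apply: prefS_S (prefix_rcons_neq _ pre_v).
Qed.

Variables (Q : Type) (q0 : Q) (delta : Q -> letter k -> option Q) (F : pred Q).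
Hypothesis accepts_pos : forall u, posHat Sp Sm ce u -> accepts delta q0 F u.
Hypothesis delta_used : forall q x q', delta q x = Some q' ->
  exists u v, posHat Sp Sm ce v /\ prefix (rcons u x) v /\ run delta q0 u = Some q.

Lemma letter_step_Act q q' s b :
  delta q (inl (s, b)) = Some q' ->
  exists w qf, [/\ prefS S (rcons w s), inSigmaAct S ce (Act S ce w),
                   b = (ce w != 0%N) & delta q (inr (Act S ce w)) = Some qf].
Proof.
move=> /delta_used [u [v [pos_v [pre_v run_u]]]].
have [w [Sws def_u ->]] := posHat_prefix_Enc pos_v pre_v.
have Sw : prefS S w by exact: prefS_prefix (prefix_rcons w s) Sws.
have pos_Act : posHat Sp Sm ce (rcons u (inr (Act S ce w))).
  by right; exists w; rewrite def_u.
have [qf step] := accepts_rcons_step (accepts_pos pos_Act) run_u.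
by exists w, qf; split=> //; exists w.
Qed.

End Enriched.

Theorem lemma2 (k : nat) (Sp Sm : seq (word k)) (ce : word k -> nat)
  (Q : finType) (q0 : Q) (delta : Q -> letter k -> option Q) (F : pred Q) :
  (forall w, w \in Sp -> w \notin Sm) ->
  ce [::] = 0%N ->
  (forall (w : word k) (s : 'I_k), prefS (Sp ++ Sm) (rcons w s) ->
     ((ce (rcons w s))%:Z - (ce w)%:Z)%R \in [:: 0%R; 1%R; (-1)%R]) ->
  (forall u, posHat Sp Sm ce u -> accepts delta q0 F u) ->
  (forall u, negHat Sp Sm ce u -> ~~ accepts delta q0 F u) ->
  (forall q x q', delta q x = Some q' ->
     exists u v, posHat Sp Sm ce v /\ prefix (rcons u x) v /\
                 run delta q0 u = Some q) ->
  forall (q q' : Q) (s : 'I_k),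
    (delta q (inl (s, false)) = Some q' ->
       exists (a : act k) (qf : Q), inSigmaAct (Sp ++ Sm) ce a /\
         a.1 = false /\ delta q (inr a) = Some qf /\
         a.2 s \in [:: Some 0%R; Some 1%R]) /\
    (delta q (inl (s, true)) = Some q' ->
       exists (a : act k) (qf : Q), inSigmaAct (Sp ++ Sm) ce a /\
         a.1 = true /\ delta q (inr a) = Some qf /\
         a.2 s \in [:: Some (-1)%R; Some 0%R; Some 1%R]).
Proof.
move=> _ ce_nil ce_step accepts_pos _ delta_used q q' s.
split=> /(letter_step_Act ce_nil accepts_pos delta_used) [w [qf [Sws Sigma_w bit_w step]]];
  exists (Act (Sp ++ Sm) ce w), qf; rewrite Act_bit -bit_w Act_entry //;
  do !split=> //; move: (ce_step w s Sws); rewrite !inE.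
- have /eqP ce_w0 : ce w == 0%N by apply/negbFE; rewrite -bit_w.
  by rewrite ce_w0 GRing.subr0; case: (ce _) => [|[|n]].
- by case/or3P=> /eqP ->; rewrite eqxx ?orbT.
Qed.
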